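(* Let $(M,d)$ be a metric space, $\mathsf{P}\subseteq M$ a set of $n$ points, $1\le\ell\le k\le n$ integers with $m=\lfloor k/\ell\rfloor\ge 2$. Let $Q=\{q_1,\dots,q_m\}$ be the output of Gonzalez's algorithm on $\mathsf{P}$ with $m$ centers, and let $r_m=d(q_m,\{q_1,\dots,q_{m-1}\})$. Let $C\subseteq\mathsf{P}$ with $|C|=k$ and $C\supseteq\bigcup_{i=1}^m N_{\mathsf{P}}(q_i,\ell)$, let $r_{\mathrm{alg}}=\max_{p\in\mathsf{P}} d_C(p,\ell)$ and $r_{\mathrm{opt}}=\min_{C'\subseteq\mathsf{P},|C'|=k}\max_{p\in\mathsf{P}} d_{C'}(p,\ell)$. Then $r_{\mathrm{alg}}\le r_m+r_{\mathrm{opt}}$.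
   Context: Gonzalez's algorithm with $m$ centers: $q_1\in\mathsf{P}$ is arbitrary, and for $i=2,\dots,m$, $q_i$ is a point of $\mathsf{P}$ maximizing $d(p,\{q_1,\dots,q_{i-1}\})$ over $p\in\mathsf{P}$ (distance to a set = distance to its nearest element). For a finite $S\subseteq M$ and $1\le i\le|S|$, $d_S(p,i)$ is the radius of the smallest closed ball centered at $p$ containing at least $i$ points of $S$; nearest neighbors are ordered lexicographically by $(d(p,s),\text{index of }s)$ and $N_S(p,i)$ is the set of the first $i$ points of $S$ in this order. *)

From HB Require Import structures.
From mathcomp Require Import all_boot all_order all_algebra.
Set Implicit Arguments. Unset Strict Implicit. Unset Printing Implicit Defensive.
Import Order.TTheory GRing.Theory Num.Theory.
Local Open Scope ring_scope.

(* Points of P are indexed by 'I_n; D i j is the distance between the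
   i-th and the j-th point of P. *)

(* minimum of a sequence (x0 if the sequence is empty; only used on nonempty ones) *)
Definition seqmin (R : realFieldType) (x0 : R) (s : seq R) : R :=
  foldr Num.min (head x0 s) s.

Definition distset (R : realFieldType) (n : nat) (D : 'I_n -> 'I_n -> R)
  (p : 'I_n) (s : seq 'I_n) : R :=
  seqmin 0 [seq D p x | x <- s].

Definition ball_card (R : realFieldType) (n : nat) (D : 'I_n -> 'I_n -> R)
  (p : 'I_n) (S : {set 'I_n}) (r : R) : nat :=
  #|[set s in S | D p s <= r]|.

(* d_S(p,i): radius of the smallest closed ball centered at p containing at
   least i points of S (the minimum is attained at one of the distances
   d(p,s), s in S). *)
Definition dS (R : realFieldType) (n : nat) (D : 'I_n -> 'I_n -> R)
  (p : 'I_n) (S : {set 'I_n}) (i : nat) : R :=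
  seqmin 0 [seq r <- [seq D p s | s <- enum S] | (i <= ball_card D p S r)%N].

Definition lex_lt (R : realFieldType) (n : nat) (D : 'I_n -> 'I_n -> R)
  (p t s : 'I_n) : bool :=
  (D p t < D p s) || ((D p t == D p s) && (t < s)%N).

(* N_P(p,i): the first i points of P in the above order *)
Definition NN (R : realFieldType) (n : nat) (D : 'I_n -> 'I_n -> R)
  (p : 'I_n) (i : nat) : {set 'I_n} :=
  [set s : 'I_n | (#|[set t : 'I_n | lex_lt D p t s]| < i)%N].

(* the first i Gonzalez centers q_0, ..., q_{i-1} (0-based) *)
Definition gprefix (n : nat) (q : nat -> 'I_n) (i : nat) : seq 'I_n :=
  [seq q j | j <- iota 0 i].

(* q_0..q_{m-1} is a valid run of Gonzalez's algorithm with m centers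
   (q_0 arbitrary, arbitrary tie-breaking) *)
Definition gonzalez (R : realFieldType) (n : nat) (D : 'I_n -> 'I_n -> R)
  (m : nat) (q : nat -> 'I_n) : Prop :=
  forall i : nat, (0 < i)%N -> (i < m)%N ->
    forall p : 'I_n, distset D p (gprefix q i) <= distset D (q i) (gprefix q i).

From HB Require Import structures.
From mathcomp Require Import all_boot all_order all_algebra.
Import Order.TTheory GRing.Theory Num.Theory.
Local Open Scope ring_scope.

(* Let m = k/l, r_m the Gonzalez radius and r_opt the value of
   a competing set C'.  Every point p is within r_m of some centre q_j
   (Gonzalez covering property).  The l nearest neighbours N(q_j,l) of q_j
   in P are all within d_{C'}(q_j,l) <= r_opt of q_j, since any set with at
   least l points has to reach at least as far from q_j as the l-th nearest
   point of P.  Hence the closed ball of radius r_m + r_opt around p contains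
   N(q_j,l), a subset of C with l elements, so d_C(p,l) <= r_m + r_opt. *)

Section SeqMin.
Context {R : realFieldType}.

Lemma seqmin_le (x0 x : R) (s : seq R) : x \in s -> seqmin x0 s <= x.
Proof.
rewrite /seqmin; elim: s (head x0 s) => [//|a s IH] h /=.
rewrite inE ge_min => /orP [/eqP ->|/IH ->]; by rewrite ?lexx ?orbT.
Qed.

Lemma seqmin_mem (x0 : R) {s : seq R} : s != [::] -> seqmin x0 s \in s.
Proof.
have foldr_mem (h : R) (t : seq R) : foldr Num.min h t \in h :: t.
  elim: t => [|a t IH] /=; first exact: mem_head.
  rewrite /Num.min; case: ifP => _; first by rewrite !inE eqxx orbT.
  by move: IH; rewrite !inE => /orP [->|->]; rewrite ?orbT.
case: s => [//|a s] _; move: (foldr_mem a (a :: s)).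
by rewrite /seqmin /= [in X in X -> _]inE => /orP [/eqP ->|//]; apply: mem_head.
Qed.

End SeqMin.

Section Distances.
Context {R : realFieldType} {n : nat} {D : 'I_n -> 'I_n -> R}.

Lemma distset_attained (p : 'I_n) {s : seq 'I_n} :
  s != [::] -> exists2 x, x \in s & distset D p s = D p x.
Proof.
move=> s_ne; have map_ne : [seq D p x | x <- s] != [::] by case: s s_ne.
by case/mapP: (seqmin_mem 0 map_ne) => x x_s E; exists x.
Qed.

Section Neighbourhoods.
Context {p : 'I_n}.

Lemma lex_irr s : lex_lt D p s s = false.
Proof. by rewrite /lex_lt ltxx ltnn andbF. Qed.

Lemma lex_trans a b c : lex_lt D p a b -> lex_lt D p b c -> lex_lt D p a c.
Proof.
rewrite /lex_lt => /orP [H1|/andP [/eqP E1 H1]] /orP [H2|/andP [/eqP E2 H2]].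
- by rewrite (lt_trans H1 H2).
- by rewrite -E2 H1.
- by rewrite E1 H2.
- by rewrite E1 E2 eqxx (ltn_trans H1 H2) orbT.
Qed.

Lemma lex_total a b : a != b -> lex_lt D p a b || lex_lt D p b a.
Proof.
move=> neq_ab; rewrite /lex_lt.
case: (ltgtP (D p a) (D p b)) => //= _.
by case: (ltngtP a b) => // /val_inj E; rewrite E eqxx in neq_ab.
Qed.

(* The position of s in the order; N_P(p,l) is the set of points of rank < l. *)
Definition rank (s : 'I_n) : nat := #|[set t | lex_lt D p t s]|.

Lemma rank_lt s : (rank s < n)%N.
Proof.
suff /proper_card : [set t | lex_lt D p t s] \proper [set: 'I_n].
  by rewrite cardsT card_ord.
by rewrite properT; apply/negP => /eqP E; move: (in_setT s); rewrite -E inE lex_irr.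
Qed.

Lemma rank_lex a b : lex_lt D p a b -> (rank a < rank b)%N.
Proof.
move=> lt_ab; apply: proper_card; apply/properP; split.
  by apply/subsetP => t; rewrite !inE => /lex_trans; apply.
by exists a; rewrite !inE ?lt_ab ?lex_irr.
Qed.

Lemma rank_inj : injective rank.
Proof.
move=> a b E; apply/eqP/negPn/negP => /lex_total /orP [] /rank_lex;
  by rewrite E ltnn.
Qed.

(* Ranks are a bijection onto {0, ..., n-1}, so N_P(p,l) has exactly l points. *)
Lemma card_NN (l : nat) : (l <= n)%N -> #|NN D p l| = l.
Proof.
move=> le_ln; pose f s : 'I_n := Ordinal (rank_lt s).
have f_inj : injective f by move=> a b /(congr1 val) /rank_inj.
have -> : NN D p l = f @^-1: [set i : 'I_n | (i < l)%N] by apply/setP => s; rewrite !inE.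
rewrite card_preimset //.
have -> : [set i : 'I_n | (i < l)%N] = widen_ord le_ln @: [set: 'I_l].
  apply/setP => i; rewrite inE.
  apply/idP/imsetP => [lt_il|[j _ ->]]; last exact: ltn_ord j.
  by exists (Ordinal lt_il) => //; apply: val_inj.
rewrite card_imset ?cardsT ?card_ord //.
by move=> a b /(congr1 val) /= /val_inj.
Qed.

Lemma dS_le_ball {S : {set 'I_n}} {l : nat} {s : 'I_n} :
  s \in S -> (l <= ball_card D p S (D p s))%N -> dS D p S l <= D p s.
Proof.
move=> s_S ball_l; apply: seqmin_le.
by rewrite mem_filter ball_l map_f ?mem_enum.
Qed.

Lemma dS_attained {S : {set 'I_n}} {l : nat} :
  (l <= #|S|)%N -> (l <= ball_card D p S (dS D p S l))%N.
Proof.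
case: (set_0Vmem S) => [->|[s0 s0_S]]; first by rewrite cards0 leqn0 => /eqP ->.
move=> le_lS; case: (arg_maxP (D p) s0_S) => s s_S s_far.
have ball_s : ball_card D p S (D p s) = #|S|.
  rewrite /ball_card; congr #|pred_of_set _|.
  by apply/setP => t; rewrite inE andb_idr // => /s_far.
have cand_ne : [seq r <- [seq D p t | t <- enum S] | (l <= ball_card D p S r)%N] != [::].
  apply/eqP => E; suff : D p s \in [::] by [].
  by rewrite -E mem_filter ball_s le_lS map_f ?mem_enum.
by move: (seqmin_mem 0 cand_ne); rewrite mem_filter => /andP [].
Qed.

Lemma dS_le {S A : {set 'I_n}} {l : nat} {r : R} :
  (0 < l)%N -> A \subset S -> (l <= #|A|)%N ->
  (forall a, a \in A -> D p a <= r) -> dS D p S l <= r.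
Proof.
move=> l_gt0 sub_AS le_lA A_near.
have [a0 a0_A] : exists a0, a0 \in A by apply/set0Pn; rewrite -card_gt0 (leq_trans l_gt0).
case: (arg_maxP (D p) a0_A) => a a_A a_far.
apply: le_trans (A_near a a_A); apply: dS_le_ball; first exact: (subsetP sub_AS).
apply: (leq_trans le_lA); apply/subset_leq_card/subsetP => t t_A.
by rewrite inE (subsetP sub_AS t t_A); apply: a_far.
Qed.

Lemma NN_le_dS {S : {set 'I_n}} {l : nat} {s : 'I_n} :
  s \in NN D p l -> (l <= #|S|)%N -> D p s <= dS D p S l.
Proof.
rewrite inE -/(rank s) => rank_s le_lS; rewrite leNgt; apply/negP => lt_dS.
suff : (l <= rank s)%N by rewrite leqNgt rank_s.
apply: leq_trans (dS_attained le_lS) _; apply/subset_leq_card/subsetP => t.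
by rewrite !inE => /andP [_ le_t]; rewrite /lex_lt (le_lt_trans le_t lt_dS).
Qed.

End Neighbourhoods.

Lemma gprefix_nonempty (q : nat -> 'I_n) {i : nat} : (0 < i)%N -> gprefix q i != [::].
Proof. by rewrite -size_eq0 size_map size_iota -lt0n. Qed.

Lemma gonzalez_cover {m : nat} {q : nat -> 'I_n} :
  gonzalez D m q -> (2 <= m)%N -> forall p, exists2 j, (j < m)%N &
    D p (q j) <= distset D (q m.-1) (gprefix q m.-1).
Proof.
move=> hq hm p; have m1_gt0 : (0 < m.-1)%N by rewrite -subn1 subn_gt0.
have m1_lt : (m.-1 < m)%N by rewrite prednK // (leq_trans _ hm).
case: (distset_attained p (gprefix_nonempty q m1_gt0)) => x /mapP [j].
rewrite mem_iota => /andP [_ lt_j] -> E.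
by exists j; [exact: ltn_trans m1_lt | rewrite -E; exact: hq].
Qed.

End Distances.

Theorem mainTheorem9 (R : realFieldType) (M : Type) (d : M -> M -> R)
  (d_ge0 : forall x y, 0 <= d x y)
  (d_eq0 : forall x y, d x y = 0 <-> x = y)
  (d_sym : forall x y, d x y = d y x)
  (d_tri : forall x y z, d x z <= d x y + d y z)
  (n : nat) (pts : 'I_n -> M) (pts_inj : injective pts)
  (l k : nat) (hl : (1 <= l)%N) (hlk : (l <= k)%N) (hkn : (k <= n)%N)
  (hm : (2 <= k %/ l)%N)
  (q : nat -> 'I_n)
  (hq : gonzalez (fun i j => d (pts i) (pts j)) (k %/ l) q)
  (C : {set 'I_n}) (hC : #|C| = k)
  (hNC : forall j : nat, (j < k %/ l)%N ->
           NN (fun i j => d (pts i) (pts j)) (q j) l \subset C) :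
  let D := fun i j : 'I_n => d (pts i) (pts j) in
  let r_m := distset D (q (k %/ l).-1) (gprefix q (k %/ l).-1) in
  let r_alg := \big[Num.max/0]_(p < n) dS D p C l in
  forall C' : {set 'I_n}, #|C'| = k ->
    r_alg <= r_m + \big[Num.max/0]_(p < n) dS D p C' l.
Proof.
move=> D r_m r_alg C' hC'.
set r_opt := \big[Num.max/0]_(p < n) dS D p C' l.
(* Both radii are nonnegative, which covers the initial value 0 of r_alg. *)
have r_m_ge0 : 0 <= r_m.
  have m1_gt0 : (0 < (k %/ l).-1)%N by rewrite -subn1 subn_gt0.
  rewrite /r_m; have [x _ ->] :=
    distset_attained (D:=D) (q (k %/ l).-1) (gprefix_nonempty q m1_gt0).
  exact: d_ge0.
have r_opt_ge0 : 0 <= r_opt by apply: bigmax_ge_id.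
apply: bigmax_le => [|p _]; first exact: addr_ge0.
(* p is within r_m of a centre q_j, whose l nearest neighbours lie in C and
   within r_opt of q_j. *)
have [j lt_j near_pj] := gonzalez_cover hq hm p.
apply: (dS_le hl (hNC j lt_j)); first by rewrite card_NN // (leq_trans hlk).
move=> a a_N; apply: le_trans (d_tri _ (pts (q j)) _) _; apply: lerD => //.
apply: le_trans (le_bigmax _ (fun c => dS D c C' l) (q j)).
by apply: NN_le_dS a_N _; rewrite hC'.
Qed.
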